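(* Consider the ideal MHD system in Eulerian Clebsch variables with dependent variables $z=(z^1,\dots,z^{15})=(u^1,u^2,u^3,\rho,S,\mu,B^1,B^2,B^3,\Gamma^1,\Gamma^2,\Gamma^3,\lambda,\beta,\phi)$, functions of $(x^0,x^1,x^2,x^3)=(t,x,y,z)$, and let $\varepsilon(\rho,S)$ be a smooth internal energy density and $\mu_0>0$ a constant. Define the one-forms on $z$-space $$\omega^0=\phi\,d\rho+\beta\,dS+\lambda\,d\mu+\Gamma_s\,dB^s,$$ $$\omega^i=u^i(\beta\,dS+\lambda\,d\mu+\phi\,d\rho)+\rho\phi\,du^i+(\Gamma_sB^s)\,du^i-B^i\,\Gamma_s\,du^s+u^i\,\Gamma_s\,dB^s\quad(i=1,2,3),$$ and write $\omega^\alpha=L^\alpha_j(z)\,dz^j$. Let $H(z)=-\left(\tfrac12\rho u^2-\varepsilon(\rho,S)-\tfrac{B^2}{2\mu_0}\right)$ and $\mathsf{K}^\alpha_{ij}=\partial L^\alpha_j/\partial z^i-\partial L^\alpha_i/\partial z^j$. Let $dV=dt\wedge dx\wedge dy\wedge dz$, $d\tilde{x}_\alpha=\partial_{x^\alpha}\lrcorner dV=(-1)^\alpha dx^0\wedge\cdots\wedge\widehat{dx^\alpha}\wedge\cdots\wedge dx^3$, and define the 4-form on $(x,z)$-space $$\Theta=\omega^\alpha\wedge d\tilde{x}_\alpha-H\,dV.$$ For a section $\psi: x\mapsto (x,z(x))$, the pullback satisfies $\psi^*(\Theta)=L\,dV$, where $L=L^\alpha_j(z)\,\partial z^j/\partial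 x^\alpha-H(z)$ is the constrained Lagrangian $$L=\tfrac12\rho u^2-\varepsilon(\rho,S)-\tfrac{B^2}{2\mu_0}+\phi\big(\rho_t+\nabla\cdot(\rho\mathbf{u})\big)+\beta\big(S_t+\mathbf{u}\cdot\nabla S\big)+\lambda\big(\mu_t+\mathbf{u}\cdot\nabla\mu\big)+\boldsymbol{\Gamma}\cdot\big(\mathbf{B}_t-\nabla\times(\mathbf{u}\times\mathbf{B})+\mathbf{u}(\nabla\cdot\mathbf{B})\big).$$ Moreover, the stationary point conditions $\delta J/\delta z^i=0$ of the action $J=\int\psi^*(\Theta)=\int L\,dV$ are $$\frac{\partial L}{\partial z^i}-\frac{\partial}{\partial x^\alpha}\left(\frac{\partial L}{\partial z^i_{,\alpha}}\right)=\mathsf{K}^\alpha_{ij}\frac{\partial z^j}{\partial x^\alpha}-\frac{\partial H}{\partial z^i}=0,\quad i=1,\dots,15,$$ i.e. the multi-symplectic system $\mathsf{K}^\alpha_{ij}\,\partial z^j/\partial x^\alpha=\partial H/\partial z^i$ is the set of stationary point conditions of $J$.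
   Context: Summation is over repeated indices: $\alpha=0,\dots,3$, $j=1,\dots,15$, $s=1,2,3$. Here $\rho$ is density, $\mathbf{u}$ velocity, $S$ entropy, $\mu$ a Lin constraint variable, $\mathbf{B}$ magnetic field, and $\phi,\beta,\lambda,\boldsymbol{\Gamma}$ are Lagrange multipliers (Clebsch potentials); $z^j_{,\alpha}=\partial z^j/\partial x^\alpha$, $u^2=|\mathbf{u}|^2$, $B^2=|\mathbf{B}|^2$, $\Gamma_s=\Gamma^s$. *)

From Stdlib Require Import Reals.
From Coquelicot Require Import Coquelicot.
Open Scope R_scope.

Fixpoint rsum (n : nat) (f : nat -> R) : R :=
  match n with O => 0 | S m => rsum m f + f m end.

(* points of R^n are represented as nat -> R (only the first n coords matter) *)
Definition upd (p : nat -> R) (k : nat) (t : R) : nat -> R :=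
  fun n => if Nat.eqb n k then t else p n.

Definition pderiv (f : (nat -> R) -> R) (p : nat -> R) (k : nat) : R :=
  Derive (fun t => f (upd p k t)) (p k).

Definition ebasis (k : nat) : nat -> R := fun n => if Nat.eqb n k then 1 else 0.

Fixpoint detn (n : nat) (M : nat -> nat -> R) : R :=
  match n with
  | O => 1
  | S m => rsum (S m) (fun k =>
      (-1) ^ k * M O k * detn m (fun i j => M (S i) (if Nat.ltb j k then j else S j)))
  end.

(* ---------- indexing of the dependent variables z^1..z^15 (0-based) ----------
   z = (u1,u2,u3, rho, S, mu, B1,B2,B3, G1,G2,G3, lambda, beta, phi)
   index:  0  1  2   3   4   5   6  7  8   9 10 11     12     13   14 *)
Definition iu (k : nat) : nat := (k - 1)%nat.   (* k = 1,2,3 *)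
Definition irho : nat := 3.
Definition iS : nat := 4.
Definition imu : nat := 5.
Definition iB (k : nat) : nat := (5 + k)%nat.   (* k = 1,2,3 *)
Definition iG (k : nat) : nat := (8 + k)%nat.   (* k = 1,2,3 *)
Definition ilam : nat := 12.
Definition ibeta : nat := 13.
Definition iphi : nat := 14.

Definition sum3 (f : nat -> R) : R := f 1%nat + f 2%nat + f 3%nat.

(* ---------- the one-forms omega^alpha on z-space ----------
   omegaz a z dz = omega^a at the point z, applied to the z-space vector dz *)
Definition omegaz (a : nat) (z dz : nat -> R) : R :=
  match a with
  | O => z iphi * dz irho + z ibeta * dz iS + z ilam * dz imu
         + sum3 (fun s => z (iG s) * dz (iB s))
  | S i' =>
    let i := S i' in
    if Nat.leb i 3 then
      z (iu i) * (z ibeta * dz iS + z ilam * dz imu + z iphi * dz irho)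
      + z irho * z iphi * dz (iu i)
      + sum3 (fun s => z (iG s) * z (iB s)) * dz (iu i)
      - z (iB i) * sum3 (fun s => z (iG s) * dz (iu s))
      + z (iu i) * sum3 (fun s => z (iG s) * dz (iB s))
    else 0
  end.

Definition Lcoef (a j : nat) (z : nat -> R) : R := omegaz a z (ebasis j).

Definition Hfun (eps : R -> R -> R) (mu0 : R) (z : nat -> R) : R :=
  - (1/2 * z irho * sum3 (fun s => z (iu s) ^ 2) - eps (z irho) (z iS)
     - sum3 (fun s => z (iB s) ^ 2) / (2 * mu0)).

Definition Kfun (a i j : nat) (z : nat -> R) : R :=
  pderiv (Lcoef a j) z i - pderiv (Lcoef a i) z j.

(* ---------- forms on (x,z)-space ----------
   A tangent vector v of (x,z)-space is nat -> R with v 0..3 the x-components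
   and v (4+j) the component along z^j (j = 0..14). *)
Definition zpart (v : nat -> R) : nat -> R := fun j => v (4 + j)%nat.

Definition dV (v0 v1 v2 v3 : nat -> R) : R :=
  detn 4 (fun i j => (match i with O => v0 | 1%nat => v1 | 2%nat => v2 | _ => v3 end) j).

Definition dxt (a : nat) (w1 w2 w3 : nat -> R) : R := dV (ebasis a) w1 w2 w3.

Definition wedge13 (w : (nat -> R) -> R) (eta : (nat -> R) -> (nat -> R) -> (nat -> R) -> R)
  (v0 v1 v2 v3 : nat -> R) : R :=
  w v0 * eta v1 v2 v3 - w v1 * eta v0 v2 v3 + w v2 * eta v0 v1 v3 - w v3 * eta v0 v1 v2.

Definition Theta (eps : R -> R -> R) (mu0 : R) (z : nat -> R) (v0 v1 v2 v3 : nat -> R) : R :=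
  rsum 4 (fun a => wedge13 (fun v => omegaz a z (zpart v)) (dxt a) v0 v1 v2 v3)
  - Hfun eps mu0 z * dV v0 v1 v2 v3.

(* ---------- sections psi : x |-> (x, z(x)) ----------
   zf : (nat -> R) -> (nat -> R), x = (x^0,..,x^3) = (t,x,y,z) *)
Definition jet (zf : (nat -> R) -> nat -> R) (x : nat -> R) (a j : nat) : R :=
  pderiv (fun y => zf y j) x a.

Definition dpsi (zf : (nat -> R) -> nat -> R) (x : nat -> R) (b : nat) : nat -> R :=
  fun n => if Nat.ltb n 4 then ebasis b n else jet zf x b (n - 4)%nat.

(* coefficient of dV in psi^* Theta : psi^*Theta = (pullTheta x) dV *)
Definition pullTheta (eps : R -> R -> R) (mu0 : R) (zf : (nat -> R) -> nat -> R) (x : nat -> R) : R :=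
  Theta eps mu0 (zf x) (dpsi zf x 0) (dpsi zf x 1) (dpsi zf x 2) (dpsi zf x 3).

(* Lagrangian as a function of (z, p), p a j standing for z^j_{,a}:
   L = L^a_j(z) p^j_a - H(z) *)
Definition Lden (eps : R -> R -> R) (mu0 : R) (z : nat -> R) (p : nat -> nat -> R) : R :=
  rsum 4 (fun a => rsum 15 (fun j => Lcoef a j z * p a j)) - Hfun eps mu0 z.

Definition curl (d : nat -> ((nat -> R) -> R) -> R) (F : nat -> (nat -> R) -> R) (k : nat) : R :=
  match k with
  | 1%nat => d 2%nat (F 3%nat) - d 3%nat (F 2%nat)
  | 2%nat => d 3%nat (F 1%nat) - d 1%nat (F 3%nat)
  | 3%nat => d 1%nat (F 2%nat) - d 2%nat (F 1%nat)
  | _ => 0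
  end.

Definition crossF (A B : nat -> (nat -> R) -> R) (k : nat) : (nat -> R) -> R :=
  fun y => match k with
  | 1%nat => A 2%nat y * B 3%nat y - A 3%nat y * B 2%nat y
  | 2%nat => A 3%nat y * B 1%nat y - A 1%nat y * B 3%nat y
  | 3%nat => A 1%nat y * B 2%nat y - A 2%nat y * B 1%nat y
  | _ => 0
  end.

Definition Lagr (eps : R -> R -> R) (mu0 : R) (zf : (nat -> R) -> nat -> R) (x : nat -> R) : R :=
  let f (j : nat) : (nat -> R) -> R := fun y => zf y j in
  let d (k : nat) (g : (nat -> R) -> R) : R := pderiv g x k in
  let uF (k : nat) := f (iu k) in
  let BF (k : nat) := f (iB k) in
  let z := zf x in
  1/2 * z irho * sum3 (fun s => z (iu s) ^ 2) - eps (z irho) (z iS)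
  - sum3 (fun s => z (iB s) ^ 2) / (2 * mu0)
  + z iphi * (d 0%nat (f irho) + sum3 (fun k => d k (fun y => f irho y * uF k y)))
  + z ibeta * (d 0%nat (f iS) + sum3 (fun k => z (iu k) * d k (f iS)))
  + z ilam * (d 0%nat (f imu) + sum3 (fun k => z (iu k) * d k (f imu)))
  + sum3 (fun s => z (iG s) *
      (d 0%nat (BF s) - curl d (crossF uF BF) s
       + z (iu s) * sum3 (fun k => d k (BF k)))).

Definition upd2 (p : nat -> nat -> R) (a j : nat) (t : R) : nat -> nat -> R :=
  fun b k => if andb (Nat.eqb b a) (Nat.eqb k j) then t else p b k.

Definition dL_dp (eps : R -> R -> R) (mu0 : R) (z : nat -> R) (p : nat -> nat -> R) (i a : nat) : R :=
  Derive (fun t => Lden eps mu0 z (upd2 p a i t)) (p a i).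

Definition EL (eps : R -> R -> R) (mu0 : R) (zf : (nat -> R) -> nat -> R) (i : nat) (x : nat -> R) : R :=
  pderiv (fun z' => Lden eps mu0 z' (jet zf x)) (zf x) i
  - rsum 4 (fun a => pderiv (fun y => dL_dp eps mu0 (zf y) (jet zf y) i a) x a).

(* The Lagrangian is affine in the jet, L = L^a_j(z) z^j_{,a} - H(z).  Hence
   dL/dz^i_{,a} = L^a_i(z), whose total x^a-derivative is, by the chain rule,
   (dL^a_i/dz^j) z^j_{,a}; subtracting this from dL/dz^i = (dL^a_j/dz^i) z^j_{,a}
   - dH/dz^i leaves K^a_{ij} z^j_{,a} - dH/dz^i.  For the pullback, d psi maps
   the coordinate frame e_b to (e_b, z_{,b}); on such a frame dx~_a only sees
   the a-th vector, so psi^* Theta = omega^a(z_{,a}) - H, and expanding the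
   one-forms gives the explicit Lagrangian by a polynomial identity. *)
From Stdlib Require Import Reals Lia Lra FunctionalExtensionality.
From Coquelicot Require Import Coquelicot.
Open Scope R_scope.

Lemma rsum_ext n f g : (forall k, (k < n)%nat -> f k = g k) -> rsum n f = rsum n g.
Proof.
  induction n as [|n IH]; intros H; simpl; [reflexivity|].
  rewrite IH, H; [reflexivity | lia | intros k Hk; apply H; lia].
Qed.

Lemma rsum_plus n f g : rsum n (fun k => f k + g k) = rsum n f + rsum n g.
Proof. induction n as [|n IH]; simpl; [ring | rewrite IH; ring]. Qed.

Lemma rsum_minus n f g : rsum n (fun k => f k - g k) = rsum n f - rsum n g.
Proof. induction n as [|n IH]; simpl; [ring | rewrite IH; ring]. Qed.

Lemma rsum_scal_l n c f : rsum n (fun k => c * f k) = c * rsum n f.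
Proof. induction n as [|n IH]; simpl; [ring | rewrite IH; ring]. Qed.

Lemma rsum_zero n : rsum n (fun _ => 0) = 0.
Proof. induction n as [|n IH]; simpl; [ring | rewrite IH; ring]. Qed.

Lemma rsum_kronecker n j f : (j < n)%nat ->
  rsum n (fun k => f k * (if Nat.eqb k j then 1 else 0)) = f j.
Proof.
  induction n as [|n IH]; intros Hj; [lia|]. simpl.
  destruct (Nat.eqb_spec n j) as [<-|Hnj].
  - rewrite (rsum_ext _ _ (fun _ => 0)), rsum_zero; [ring|].
    intros k Hk. destruct (Nat.eqb_spec k n); [lia | ring].
  - rewrite IH by lia. ring.
Qed.

Lemma is_derive_rsum n (F : nat -> R -> R) d t :
  (forall k, (k < n)%nat -> is_derive (F k) t (d k)) ->
  is_derive (fun s => rsum n (fun k => F k s)) t (rsum n d).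
Proof.
  induction n as [|n IH]; intros H; simpl.
  - exact (is_derive_const _ _).
  - apply (is_derive_plus (fun s => rsum n (fun k => F k s)) (F n));
      [apply IH; intros; apply H | apply H]; lia.
Qed.

Lemma upd_id z j : upd z j (z j) = z.
Proof.
  apply functional_extensionality; intros n; unfold upd.
  destruct (Nat.eqb_spec n j) as [->|]; reflexivity.
Qed.

Lemma is_derive_upd z j k t : is_derive (fun s => upd z j s k) t (if Nat.eqb k j then 1 else 0).
Proof. unfold upd. destruct (Nat.eqb k j); [exact (is_derive_id _) | exact (is_derive_const _ _)]. Qed.

Section ChainRule.

Variable n : nat.

(* [Df] is a gradient of [f] in the strong sense that the chain rule holds along
   every curve whose first [n] coordinates are differentiable. *)
Definition has_gradient (f : (nat -> R) -> R) (Df : nat -> (nat -> R) -> R) : Prop :=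
  forall (c : R -> nat -> R) t0, (forall j, (j < n)%nat -> ex_derive (fun t => c t j) t0) ->
  is_derive (fun t => f (c t)) t0 (rsum n (fun j => Df j (c t0) * Derive (fun t => c t j) t0)).

Definition chain_rule (f : (nat -> R) -> R) : Prop :=
  has_gradient f (fun j z => pderiv f z j).

Lemma has_gradient_pderiv f Df z j : has_gradient f Df -> (j < n)%nat -> pderiv f z j = Df j z.
Proof.
  intros Hf Hj. unfold pderiv.
  assert (Hline : forall k, (k < n)%nat -> ex_derive (fun t => upd z j t k) (z j))
    by (intros; eexists; apply is_derive_upd).
  pose proof (Hf (upd z j) (z j) Hline) as Hd. rewrite upd_id in Hd.
  apply is_derive_unique in Hd. etransitivity; [exact Hd|].
  rewrite (rsum_ext _ _ (fun k => Df k z * (if Nat.eqb k j then 1 else 0))).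
  - apply rsum_kronecker, Hj.
  - intros k _. f_equal. apply is_derive_unique, is_derive_upd.
Qed.

Lemma has_gradient_chain_rule f Df : has_gradient f Df -> chain_rule f.
Proof.
  intros Hf c t0 Hc. erewrite rsum_ext; [apply (Hf c t0 Hc)|].
  intros k Hk. simpl. rewrite (has_gradient_pderiv f Df); auto.
Qed.

Lemma chain_rule_ex_derive f z i : chain_rule f -> (i < n)%nat ->
  ex_derive (fun t => f (upd z i t)) (z i).
Proof. intros Hf Hi. eexists. apply Hf. intros k _. eexists. apply is_derive_upd. Qed.

Lemma chain_rule_ext f g : (forall z, f z = g z) -> chain_rule f -> chain_rule g.
Proof. intros H. replace g with f; [auto | apply functional_extensionality, H]. Qed.

Lemma chain_rule_const c : chain_rule (fun _ => c).
Proof.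
  apply (has_gradient_chain_rule _ (fun _ _ => 0)). intros cc t0 _.
  rewrite (rsum_ext _ _ (fun _ => 0)), rsum_zero by (intros; ring).
  exact (is_derive_const _ _).
Qed.

Lemma chain_rule_proj k : (k < n)%nat -> chain_rule (fun z => z k).
Proof.
  intros Hk. apply (has_gradient_chain_rule _ (fun j _ => if Nat.eqb j k then 1 else 0)).
  intros c t0 Hc.
  rewrite (rsum_ext _ _ (fun j => Derive (fun t => c t j) t0 * (if Nat.eqb j k then 1 else 0)))
    by (intros; ring).
  rewrite rsum_kronecker by exact Hk. apply Derive_correct, Hc, Hk.
Qed.

Section Closure.

Variables f g : (nat -> R) -> R.
Hypotheses (Hf : chain_rule f) (Hg : chain_rule g).

Let df c t0 := rsum n (fun j => pderiv f (c t0) j * Derive (fun t => c t j) t0).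
Let dg c t0 := rsum n (fun j => pderiv g (c t0) j * Derive (fun t => c t j) t0).

Lemma chain_rule_plus : chain_rule (fun z => f z + g z).
Proof.
  apply (has_gradient_chain_rule _ (fun j z => pderiv f z j + pderiv g z j)). intros c t0 Hc.
  replace (rsum n _) with (df c t0 + dg c t0)
    by (unfold df, dg; rewrite <- rsum_plus; apply rsum_ext; intros; ring).
  apply (is_derive_plus (fun t => f (c t)) (fun t => g (c t))); auto.
Qed.

Lemma chain_rule_minus : chain_rule (fun z => f z - g z).
Proof.
  apply (has_gradient_chain_rule _ (fun j z => pderiv f z j - pderiv g z j)). intros c t0 Hc.
  replace (rsum n _) with (df c t0 - dg c t0)
    by (unfold df, dg; rewrite <- rsum_minus; apply rsum_ext; intros; ring).
  apply (is_derive_minus (fun t => f (c t)) (fun t => g (c t))); auto.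
Qed.

Lemma chain_rule_mult : chain_rule (fun z => f z * g z).
Proof.
  apply (has_gradient_chain_rule _ (fun j z => pderiv f z j * g z + f z * pderiv g z j)).
  intros c t0 Hc.
  replace (rsum n _) with (df c t0 * g (c t0) + f (c t0) * dg c t0).
  - apply (is_derive_mult (fun t => f (c t)) (fun t => g (c t))); auto.
    intros; apply Rmult_comm.
  - unfold df, dg. rewrite Rmult_comm, <- !rsum_scal_l, <- rsum_plus.
    apply rsum_ext; intros; ring.
Qed.

End Closure.

Lemma chain_rule_opp f : chain_rule f -> chain_rule (fun z => - f z).
Proof.
  intros Hf. apply (chain_rule_ext (fun z => 0 - f z)); [intros; ring|].
  apply chain_rule_minus; [apply chain_rule_const | exact Hf].
Qed.

Lemma chain_rule_div_const f c : chain_rule f -> chain_rule (fun z => f z / c).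
Proof. intros Hf. apply chain_rule_mult; [exact Hf | apply chain_rule_const]. Qed.

Lemma chain_rule_pow2 f : chain_rule f -> chain_rule (fun z => f z ^ 2).
Proof.
  intros Hf. apply (chain_rule_ext (fun z => f z * f z)); [intros; ring|].
  apply chain_rule_mult; exact Hf.
Qed.

Lemma chain_rule_rsum m (F : nat -> (nat -> R) -> R) :
  (forall k, (k < m)%nat -> chain_rule (F k)) -> chain_rule (fun z => rsum m (fun k => F k z)).
Proof.
  induction m as [|m IH]; intros H; simpl.
  - apply chain_rule_const.
  - apply (chain_rule_plus (fun z => rsum m (fun k => F k z)) (F m));
      [apply IH; intros; apply H | apply H]; lia.
Qed.

Lemma pderiv_rsum m (F : nat -> (nat -> R) -> R) z i :
  (forall k, (k < m)%nat -> chain_rule (F k)) -> (i < n)%nat ->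
  pderiv (fun z => rsum m (fun k => F k z)) z i = rsum m (fun k => pderiv (F k) z i).
Proof.
  induction m as [|m IH]; intros H Hi; unfold pderiv in *; simpl.
  - apply Derive_const.
  - rewrite Derive_plus, IH; auto.
    + apply (chain_rule_ex_derive (fun z => rsum m (fun k => F k z))); [|exact Hi].
      apply chain_rule_rsum; intros; apply H; lia.
    + apply chain_rule_ex_derive; [apply H; lia | exact Hi].
Qed.

End ChainRule.

Ltac solve_chain_rule := repeat match goal with
  | |- chain_rule _ (fun _ => ?c) => apply chain_rule_const
  | |- chain_rule _ (fun z => _ + _) => apply chain_rule_plus
  | |- chain_rule _ (fun z => _ - _) => apply chain_rule_minus
  | |- chain_rule _ (fun z => - _) => apply chain_rule_opp
  | |- chain_rule _ (fun z => _ * _) => apply chain_rule_mult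
  | |- chain_rule _ (fun z => _ / _) => apply chain_rule_div_const
  | |- chain_rule _ (fun z => _ ^ 2) => apply chain_rule_pow2
  | |- chain_rule _ (fun z => z _) =>
      apply chain_rule_proj; unfold iu, iB, iG, irho, iS, imu, ilam, ibeta, iphi; lia
  end.

Lemma chain_rule_Lcoef a j : (a < 4)%nat -> chain_rule 15 (Lcoef a j).
Proof.
  intros Ha. unfold Lcoef.
  destruct a as [|[|[|[|a]]]]; try lia; unfold omegaz, sum3; cbn [Nat.leb]; solve_chain_rule.
Qed.

Lemma omegaz_Lcoef a z w : (a < 4)%nat -> omegaz a z w = rsum 15 (fun j => Lcoef a j z * w j).
Proof.
  intros Ha. unfold Lcoef.
  destruct a as [|[|[|[|a]]]]; try lia;
    unfold omegaz, ebasis, sum3, iu, iB, iG, irho, iS, imu, ilam, ibeta, iphi;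
    cbn [rsum Nat.leb Nat.eqb Nat.sub Nat.add]; ring.
Qed.

Lemma Lden_omegaz eps mu0 z p :
  Lden eps mu0 z p = rsum 4 (fun a => omegaz a z (p a)) - Hfun eps mu0 z.
Proof. unfold Lden. f_equal. apply rsum_ext. intros a Ha. symmetry. apply omegaz_Lcoef, Ha. Qed.

(* [eps] only has partial derivatives, so it is kept apart from the polynomial part of [H]. *)
Definition Hquad (mu0 : R) (z : nat -> R) : R :=
  - (1/2 * z irho * sum3 (fun s => z (iu s) ^ 2) - sum3 (fun s => z (iB s) ^ 2) / (2 * mu0)).

Lemma Hfun_Hquad eps mu0 z : Hfun eps mu0 z = Hquad mu0 z + eps (z irho) (z iS).
Proof. unfold Hfun, Hquad. ring. Qed.

Lemma ex_pderiv_Hfun eps mu0 z i :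
  (forall r s, ex_derive (fun t => eps t s) r /\ ex_derive (fun t => eps r t) s) ->
  (i < 15)%nat -> ex_derive (fun t => Hfun eps mu0 (upd z i t)) (z i).
Proof.
  intros He Hi.
  apply ex_derive_ext with (fun t => Hquad mu0 (upd z i t) + eps (upd z i t irho) (upd z i t iS));
    [intros; symmetry; apply Hfun_Hquad|].
  apply (ex_derive_plus (fun t => Hquad mu0 (upd z i t)) (fun t => eps (upd z i t irho) (upd z i t iS))).
  - apply (chain_rule_ex_derive 15); [|exact Hi]. unfold Hquad, sum3. solve_chain_rule.
  - unfold upd, irho, iS.
    destruct (Nat.eqb_spec 3 i) as [<-|]; [exact (proj1 (He (z 3%nat) (z 4%nat)))|].
    destruct (Nat.eqb_spec 4 i) as [<-|]; [exact (proj2 (He (z 3%nat) (z 4%nat)))|].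
    apply ex_derive_const.
Qed.

Lemma dL_dp_Lcoef eps mu0 z p i a : (a < 4)%nat -> (i < 15)%nat ->
  dL_dp eps mu0 z p i a = Lcoef a i z.
Proof.
  intros Ha Hi. unfold dL_dp, Lden. apply is_derive_unique.
  replace (Lcoef a i z) with (rsum 4 (fun b => rsum 15 (fun k =>
      Lcoef b k z * (if andb (Nat.eqb b a) (Nat.eqb k i) then 1 else 0))) - 0).
  - apply (is_derive_minus
      (fun t => rsum 4 (fun b => rsum 15 (fun k => Lcoef b k z * upd2 p a i t b k)))
      (fun _ => Hfun eps mu0 z)); [|exact (is_derive_const _ _)].
    apply (is_derive_rsum 4 (fun b t => rsum 15 (fun k => Lcoef b k z * upd2 p a i t b k)));
      intros b _.
    apply (is_derive_rsum 15 (fun k t => Lcoef b k z * upd2 p a i t b k)); intros k _.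
    unfold upd2. destruct (andb _ _).
    + apply (is_derive_scal (fun t => t)). exact (is_derive_id _).
    + rewrite Rmult_0_r. exact (is_derive_const _ _).
  - rewrite Rminus_0_r, (rsum_ext _ _ (fun b => Lcoef b i z * (if Nat.eqb b a then 1 else 0))).
    + apply rsum_kronecker, Ha.
    + intros b _. destruct (Nat.eqb b a); cbn [andb].
      * rewrite rsum_kronecker by exact Hi. ring.
      * rewrite (rsum_ext _ _ (fun _ => 0)), rsum_zero by (intros; ring). ring.
Qed.

Definition section_differentiable (zf : (nat -> R) -> nat -> R) (x : nat -> R) : Prop :=
  forall a j, (a < 4)%nat -> (j < 15)%nat -> ex_derive (fun t => zf (upd x a t) j) (x a).

Lemma pderiv_dL_dp_section eps mu0 zf x i a :
  section_differentiable zf x -> (a < 4)%nat -> (i < 15)%nat ->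
  pderiv (fun y => dL_dp eps mu0 (zf y) (jet zf y) i a) x a
  = rsum 15 (fun j => pderiv (Lcoef a i) (zf x) j * jet zf x a j).
Proof.
  intros Hz Ha Hi. unfold pderiv at 1.
  rewrite (Derive_ext _ (fun t => Lcoef a i (zf (upd x a t))))
    by (intros; apply dL_dp_Lcoef; assumption).
  apply is_derive_unique.
  pose proof (chain_rule_Lcoef a i Ha (fun t => zf (upd x a t)) (x a)) as Hd.
  unfold chain_rule, has_gradient in Hd; cbv beta in Hd. rewrite upd_id in Hd. apply Hd. intros j Hj. apply Hz; assumption.
Qed.

Lemma pderiv_Lden_z eps mu0 z p i :
  (forall r s, ex_derive (fun t => eps t s) r /\ ex_derive (fun t => eps r t) s) ->
  (i < 15)%nat ->
  pderiv (fun z' => Lden eps mu0 z' p) z i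
  = rsum 4 (fun a => rsum 15 (fun j => pderiv (Lcoef a j) z i * p a j))
    - pderiv (Hfun eps mu0) z i.
Proof.
  intros He Hi.
  set (row a z' := rsum 15 (fun j => Lcoef a j z' * p a j)).
  assert (Hterm : forall a, (a < 4)%nat -> forall j, (j < 15)%nat ->
      chain_rule 15 (fun z' => Lcoef a j z' * p a j)).
  { intros a Ha j _. apply chain_rule_mult; [apply chain_rule_Lcoef, Ha | apply chain_rule_const]. }
  assert (Hrow : forall a, (a < 4)%nat -> chain_rule 15 (row a))
    by (intros a Ha; apply (chain_rule_rsum 15 15 (fun j z' => Lcoef a j z' * p a j)), Hterm, Ha).
  assert (Hsplit : pderiv (fun z' => Lden eps mu0 z' p) z i
      = pderiv (fun z' => rsum 4 (fun a => row a z')) z i - pderiv (Hfun eps mu0) z i).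
  { unfold pderiv, Lden. apply Derive_minus.
    - apply (chain_rule_ex_derive 15 (fun z' => rsum 4 (fun a => row a z'))); [|exact Hi].
      apply (chain_rule_rsum 15 4 row), Hrow.
    - apply ex_pderiv_Hfun; assumption. }
  rewrite Hsplit, (pderiv_rsum 15 4 row) by assumption.
  f_equal. apply rsum_ext; intros a Ha. unfold row.
  rewrite (pderiv_rsum 15 15 (fun j z' => Lcoef a j z' * p a j)) by auto.
  apply rsum_ext; intros j _. apply Derive_scal_l.
Qed.

Lemma EL_Kfun eps mu0 zf x i :
  (forall r s, ex_derive (fun t => eps t s) r /\ ex_derive (fun t => eps r t) s) ->
  section_differentiable zf x -> (i < 15)%nat ->
  EL eps mu0 zf i x
  = rsum 4 (fun a => rsum 15 (fun j => Kfun a i j (zf x) * jet zf x a j))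
    - pderiv (Hfun eps mu0) (zf x) i.
Proof.
  intros He Hz Hi. unfold EL.
  rewrite pderiv_Lden_z by assumption.
  rewrite (rsum_ext 4 (fun a => pderiv _ x a)
    (fun a => rsum 15 (fun j => pderiv (Lcoef a i) (zf x) j * jet zf x a j)))
    by (intros; apply pderiv_dL_dp_section; assumption).
  rewrite (rsum_ext 4 (fun a => rsum 15 (fun j => Kfun a i j _ * _))
    (fun a => rsum 15 (fun j => pderiv (Lcoef a j) (zf x) i * jet zf x a j)
            - rsum 15 (fun j => pderiv (Lcoef a i) (zf x) j * jet zf x a j))).
  - rewrite rsum_minus. ring.
  - intros a _. rewrite <- rsum_minus. apply rsum_ext; intros j _. unfold Kfun. ring.
Qed.

Lemma Theta_coordinate_frame eps mu0 z (V : nat -> nat -> R) :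
  (forall b k, (b < 4)%nat -> (k < 4)%nat -> V b k = ebasis b k) ->
  Theta eps mu0 z (V 0%nat) (V 1%nat) (V 2%nat) (V 3%nat)
  = rsum 4 (fun a => omegaz a z (zpart (V a))) - Hfun eps mu0 z.
Proof.
  intros HV. unfold Theta, wedge13, dxt, dV.
  cbn [detn rsum Nat.ltb Nat.leb].
  repeat match goal with |- context [V ?b ?k] => rewrite (HV b k) by lia end.
  unfold ebasis. cbn [Nat.eqb]. ring.
Qed.

Lemma pullTheta_omegaz eps mu0 zf x :
  pullTheta eps mu0 zf x = rsum 4 (fun a => omegaz a (zf x) (jet zf x a)) - Hfun eps mu0 (zf x).
Proof.
  apply Theta_coordinate_frame. intros b k _ Hk.
  unfold dpsi. apply Nat.ltb_lt in Hk. rewrite Hk. reflexivity.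
Qed.

Section ExplicitLagrangian.

Variables (zf : (nat -> R) -> nat -> R) (x : nat -> R).
Hypothesis Hz : section_differentiable zf x.

Lemma is_derive_component a j : (a < 4)%nat -> (j < 15)%nat ->
  is_derive (fun t => zf (upd x a t) j) (x a) (jet zf x a j).
Proof. intros Ha Hj. apply Derive_correct, Hz; assumption. Qed.

Lemma pderiv_component_mult a j k : (a < 4)%nat -> (j < 15)%nat -> (k < 15)%nat ->
  pderiv (fun y => zf y j * zf y k) x a = jet zf x a j * zf x k + zf x j * jet zf x a k.
Proof.
  intros Ha Hj Hk. unfold pderiv. apply is_derive_unique.
  pose proof (is_derive_mult _ _ _ _ _ (is_derive_component a j Ha Hj)
    (is_derive_component a k Ha Hk) (fun u v => Rmult_comm u v)) as Hd.
  cbv beta in Hd. rewrite upd_id in Hd. exact Hd.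
Qed.

Lemma pderiv_component_cross a j k l m :
  (a < 4)%nat -> (j < 15)%nat -> (k < 15)%nat -> (l < 15)%nat -> (m < 15)%nat ->
  pderiv (fun y => zf y j * zf y k - zf y l * zf y m) x a
  = (jet zf x a j * zf x k + zf x j * jet zf x a k)
    - (jet zf x a l * zf x m + zf x l * jet zf x a m).
Proof.
  intros Ha Hj Hk Hl Hm. unfold pderiv. apply is_derive_unique.
  pose proof (is_derive_minus _ _ _ _ _
    (is_derive_mult _ _ _ _ _ (is_derive_component a j Ha Hj) (is_derive_component a k Ha Hk)
      (fun u v => Rmult_comm u v))
    (is_derive_mult _ _ _ _ _ (is_derive_component a l Ha Hl) (is_derive_component a m Ha Hm)
      (fun u v => Rmult_comm u v))) as Hd.
  cbv beta in Hd. rewrite upd_id in Hd. exact Hd.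
Qed.

Lemma omegaz_jet_Lagr eps mu0 :
  rsum 4 (fun a => omegaz a (zf x) (jet zf x a)) - Hfun eps mu0 (zf x) = Lagr eps mu0 zf x.
Proof.
  unfold Lagr, sum3, curl, crossF. cbv beta zeta.
  unfold iu, iB, iG, irho, iS, imu, ilam, ibeta, iphi. cbn [Nat.sub Nat.add].
  repeat match goal with |- context [pderiv (fun y => zf y ?j * zf y ?k - zf y ?l * zf y ?m) x ?a] =>
    rewrite (pderiv_component_cross a j k l m) by lia end.
  repeat match goal with |- context [pderiv (fun y => zf y ?j * zf y ?k) x ?a] =>
    rewrite (pderiv_component_mult a j k) by lia end.
  repeat match goal with |- context [pderiv (fun y => zf y ?j) x ?a] =>
    change (pderiv (fun y => zf y j) x a) with (jet zf x a j) end.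
  unfold Hfun, sum3, iu, iB, iG, irho, iS, imu, ilam, ibeta, iphi.
  cbn [rsum omegaz Nat.leb Nat.sub Nat.add].
  unfold sum3, iu, iB, iG, irho, iS, imu, ilam, ibeta, iphi. cbn [Nat.sub Nat.add]. ring.
Qed.

End ExplicitLagrangian.

Theorem proposition1 (eps : R -> R -> R) (mu0 : R) (zf : (nat -> R) -> nat -> R) :
  0 < mu0 ->
  (forall r s, ex_derive (fun t => eps t s) r /\ ex_derive (fun t => eps r t) s) ->
  (forall x a j, (a < 4)%nat -> (j < 15)%nat ->
     ex_derive (fun t => zf (upd x a t) j) (x a)) ->
  (forall x, pullTheta eps mu0 zf x = Lden eps mu0 (zf x) (jet zf x)
             /\ pullTheta eps mu0 zf x = Lagr eps mu0 zf x)
  /\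
  (forall x i, (i < 15)%nat ->
     EL eps mu0 zf i x
     = rsum 4 (fun a => rsum 15 (fun j => Kfun a i j (zf x) * jet zf x a j))
       - pderiv (Hfun eps mu0) (zf x) i)
  /\
  (forall x,
     (forall i, (i < 15)%nat -> EL eps mu0 zf i x = 0) <->
     (forall i, (i < 15)%nat ->
        rsum 4 (fun a => rsum 15 (fun j => Kfun a i j (zf x) * jet zf x a j))
        = pderiv (Hfun eps mu0) (zf x) i)).
Proof.
  (* Not needed: division is total, so the identities hold for every [mu0]. *)
  intros _ He Hz.
  assert (HEL : forall x i, (i < 15)%nat -> EL eps mu0 zf i x
      = rsum 4 (fun a => rsum 15 (fun j => Kfun a i j (zf x) * jet zf x a j))
        - pderiv (Hfun eps mu0) (zf x) i)
    by (intros x i Hi; apply EL_Kfun; [exact He | intros a j; apply Hz | exact Hi]).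
  split; [|split; [exact HEL|]].
  - intros x. rewrite pullTheta_omegaz, Lden_omegaz.
    split; [reflexivity | apply omegaz_jet_Lagr; intros a j; apply Hz].
  - intros x. split; intros H i Hi.
    + specialize (H i Hi). rewrite HEL in H by exact Hi. lra.
    + rewrite HEL, (H i Hi) by exact Hi. ring.
Qed.
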